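(* Let $f:\mathbb{Z}^n\to\mathbb{R}\cup\{+\infty\}$ be a function satisfying condition (SSQM$^\natural$) with $\arg\min f\neq\emptyset$. Then Algorithm BasicSteepestDescent applied to $f$ finds a minimizer of $f$ in a finite number of iterations.
   Context: $N=\{1,\dots,n\}$. For $i\in N$, $\chi_i\in\{0,1\}^n$ is the characteristic vector of $i$, and $\chi_0=0$. $\mathrm{dom}\,f=\{x\in\mathbb{Z}^n\mid f(x)<+\infty\}$. For $x,y\in\mathbb{Z}^n$, $\mathrm{supp}^+(x-y)=\{i\in N\mid x(i)>y(i)\}$ and $\mathrm{supp}^-(x-y)=\{j\in N\mid x(j)<y(j)\}$. Condition (SSQM$^\natural$): for all $x,y\in\mathrm{dom}\,f$ and all $i\in\mathrm{supp}^+(x-y)$ there exists $j\in\mathrm{supp}^-(x-y)\cup\{0\}$ such that at least one of the following holds: (a) $f(x-\chi_i+\chi_j)<f(x)$; (b) $f(y+\chi_i-\chi_j)<f(y)$; (c) $f(x-\chi_i+\chi_j)=f(x)$ and $f(y+\chi_i-\chi_j)=f(y)$. Algorithm BasicSteepestDescent: Step 0: choose an arbitrary $x_0\in\mathrm{dom}\,f$ and set $x:=x_0$. Step 1: if $f(x-\chi_i+\chi_j)\ge f(x)$ for every $i,j\in N\cup\{0\}$, output $x$ and stop. Step 2: find $i,j\in N\cup\{0\}$ minimizing $f(x-\chi_i+\chi_j)$. Step 3: set $x:=x-\chi_i+\chi_j$ and go to Step 1. *)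

From HB Require Import structures.
From mathcomp Require Import all_boot all_order all_algebra.
From mathcomp Require Import reals constructive_ereal.
From Stdlib Require Import Relations.
Set Implicit Arguments. Unset Strict Implicit. Unset Printing Implicit Defensive.
Import Order.TTheory GRing.Theory Num.Theory.
Local Open Scope ring_scope.
Local Open Scope ereal_scope.

Definition zvec (n : nat) := 'I_n -> int.

(* characteristic vector chi_i for i in N u {0}; None encodes the index 0, chi_0 = 0 *)
Definition chi (n : nat) (i : option 'I_n) : zvec n :=
  fun k => if i is Some i' then ((k == i')%:R)%R else 0%R.

Definition exch (n : nat) (x : zvec n) (i j : option 'I_n) : zvec n :=
  fun k => (x k - chi i k + chi j k)%R.

Definition in_dom (R : realType) (n : nat) (f : zvec n -> \bar R) (x : zvec n) : Prop :=
  f x < +oo.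

Definition SSQMnat (R : realType) (n : nat) (f : zvec n -> \bar R) : Prop :=
  forall x y : zvec n, in_dom f x -> in_dom f y ->
  forall i : 'I_n, (y i < x i)%R ->
  exists j : option 'I_n,
    (match j with None => True | Some j' => (x j' < y j')%R end) /\
    [\/ f (exch x (Some i) j) < f x,
        f (exch y j (Some i)) < f y
      | f (exch x (Some i) j) = f x /\ f (exch y j (Some i)) = f y].

Definition is_minimizer (R : realType) (n : nat) (f : zvec n -> \bar R) (x : zvec n) : Prop :=
  forall y, f x <= f y.

Definition bsd_stop (R : realType) (n : nat) (f : zvec n -> \bar R) (x : zvec n) : Prop :=
  forall i j : option 'I_n, f x <= f (exch x i j).

(* Ties in Step 2 are resolved arbitrarily (the relation allows every choice). *)
Definition bsd_step (R : realType) (n : nat) (f : zvec n -> \bar R) (x x' : zvec n) : Prop :=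
  ~ bsd_stop f x /\
  exists i j : option 'I_n,
    x' = exch x i j /\ forall i' j' : option 'I_n, f (exch x i j) <= f (exch x i' j').

From HB Require Import structures.
From mathcomp Require Import all_boot all_order all_algebra.
From mathcomp Require Import reals constructive_ereal.
From Stdlib Require Import Relations.
From mathcomp Require Import zify ring.
From Stdlib Require Import Classical FunctionalExtensionality.
Import Order.TTheory GRing.Theory Num.Theory.
Set Implicit Arguments. Unset Strict Implicit. Unset Printing Implicit Defensive.

(* Progress is measured by the l1-distance from the current point x to a
   nearest minimizer y.  Applied to a point and a minimizer, (SSQM^natural)
   says that either the point can be improved by an exchange, or the minimizer
   can be moved one step towards the point while remaining a minimizer.  Hence
   a point that no exchange improves equals its nearest minimizer, and after a
   steepest exchange x -> x' some minimizer is strictly nearer to x' than y is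
   to x (steepness rules out the improving alternative at x').  The distance
   therefore strictly decreases along a run, which must be finite. *)

Local Open Scope ring_scope.

Section Exchange.
Variable n : nat.
Implicit Types (x y : zvec n) (i j k l : option 'I_n) (a b t : 'I_n).

Lemma chi_self a : chi (Some a) a = 1.
Proof. by rewrite /chi eqxx. Qed.

Lemma chi_other i t : i <> Some t -> chi i t = 0.
Proof. by case: i => [a|] // hi; rewrite /chi; case: eqP => // ta; case: hi; rewrite ta. Qed.

Lemma exch_other x i j t : i <> Some t -> j <> Some t -> exch x i j t = x t.
Proof. by move=> hi hj; rewrite /exch !chi_other // subr0 addr0. Qed.

Lemma exch_out x a j : j <> Some a -> exch x (Some a) j a = x a - 1.
Proof. by move=> hj; rewrite /exch chi_self chi_other // addr0. Qed.

Lemma exch_in x i b : i <> Some b -> exch x i (Some b) b = x b + 1.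
Proof. by move=> hi; rewrite /exch chi_self chi_other // subr0. Qed.

Lemma exch_id x i : exch x i i = x.
Proof. by apply: functional_extensionality => t; rewrite /exch subrK. Qed.

Lemma exch_exchl x i j k : exch (exch x i j) k i = exch x k j.
Proof. by apply: functional_extensionality => t; rewrite /exch; ring. Qed.

Lemma exch_exchr x i j k : exch (exch x i j) j k = exch x i k.
Proof. by apply: functional_extensionality => t; rewrite /exch; ring. Qed.

Definition dist x y : nat := (\sum_t `|x t - y t|)%N.

Lemma dist_exchr x y k l : dist x (exch y k l) = dist (exch x l k) y.
Proof. by apply: eq_bigr => t _; rewrite /exch; congr absz; ring. Qed.

Lemma dist_update x x' y t : (forall s, s != t -> x' s = x s) ->
  (dist x' y + `|x t - y t| = dist x y + `|x' t - y t|)%N.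
Proof.
move=> hx'; rewrite /dist (bigD1 t) // [in RHS](bigD1 t) //= addnAC -addnA addnC.
by congr (_ + _ + _)%N; apply: eq_bigr => s /hx' ->.
Qed.

Lemma dist_exch_out1 x y a :
  (dist (exch x (Some a) None) y + `|(x a - y a)%R| = dist x y + `|(x a - 1 - y a)%R|)%N.
Proof.
rewrite -(exch_out x (j := None)) //; apply: dist_update => s sa.
by apply: exch_other => // -[as_]; rewrite as_ eqxx in sa.
Qed.

Lemma dist_exch_in1 x y b :
  (dist (exch x None (Some b)) y + `|(x b - y b)%R| = dist x y + `|(x b + 1 - y b)%R|)%N.
Proof.
rewrite -(exch_in x (i := None)) //; apply: dist_update => s sb.
by apply: exch_other => // -[bs]; rewrite bs eqxx in sb.
Qed.

Lemma dist_exch_lt x y i j : i <> j ->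
  (forall a, i = Some a -> y a < x a) -> (forall b, j = Some b -> x b < y b) ->
  (dist (exch x i j) y < dist x y)%N.
Proof.
move=> ij hi hj; case: i ij hi => [a|] ij hi; case: j ij hj => [b|] ij hj //.
- rewrite -(exch_exchr x (Some a) None).
  have := dist_exch_in1 (exch x (Some a) None) y b; rewrite exch_other //.
  have := dist_exch_out1 x y a; have := hi a erefl; have := hj b erefl; lia.
- by have := dist_exch_out1 x y a; have := hi a erefl; lia.
- by have := dist_exch_in1 x y b; have := hj b erefl; lia.
Qed.

Lemma dist_exch_out_le x y a j : y a < x a -> (dist (exch x (Some a) j) y <= dist x y)%N.
Proof.
move=> ya; have := dist_exch_out1 x y a; case: j => [b|]; last by lia.
rewrite -(exch_exchr x (Some a) None (Some b)).
by have := dist_exch_in1 (exch x (Some a) None) y b; lia.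
Qed.

Lemma dist_exch_in_le x y i b : x b < y b -> (dist (exch x i (Some b)) y <= dist x y)%N.
Proof.
move=> xb; have := dist_exch_in1 x y b; case: i => [a|]; last by lia.
rewrite -(exch_exchl x None (Some b) (Some a)).
by have := dist_exch_out1 (exch x None (Some b)) y a; lia.
Qed.

End Exchange.

Local Open Scope ereal_scope.

Definition steepest (R : realType) n (f : zvec n -> \bar R) x i j : Prop :=
  forall i' j', f (exch x i j) <= f (exch x i' j').

Definition nearest (R : realType) n (f : zvec n -> \bar R) (x y : zvec n) : Prop :=
  is_minimizer f y /\ forall z, is_minimizer f z -> (dist x y <= dist x z)%N.

Lemma some_dichotomy (T : Type) (p : pred T) (k : option T) :
  (forall a, k = Some a -> p a) \/ exists2 a, k = Some a & ~~ p a.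
Proof.
case: k => [a|]; last by left.
by case: (boolP (p a)) => pa; [left=> _ [<-] | right; exists a].
Qed.

Section SteepestDescent.
Variables (R : realType) (n : nat) (f : zvec n -> \bar R).
Hypothesis ssqm : SSQMnat f.
Implicit Types (x y z : zvec n) (i j k l : option 'I_n) (a b c t : 'I_n).

Lemma minimizer_dom x y : in_dom f x -> is_minimizer f y -> in_dom f y.
Proof. by move=> hx hy; apply: le_lt_trans (hy x) hx. Qed.

Lemma minimizer_exch_down x y a : in_dom f x -> is_minimizer f y -> (x a < y a)%R ->
  exists2 k, (forall b, k = Some b -> (y b < x b)%R) &
    f (exch x k (Some a)) < f x \/
    f (exch x k (Some a)) = f x /\ is_minimizer f (exch y (Some a) k).
Proof.
move=> hx hy xa; have [k [hk ex]] := ssqm (minimizer_dom hx hy) hx xa.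
exists k; first by case: k hk {ex} => // b hb _ [<-].
case: ex => [lt | lt | [ey ex]]; [by move: lt; rewrite ltNge hy | by left | right].
by split=> // z; rewrite ey; apply: hy.
Qed.

Lemma minimizer_exch_up x y c : in_dom f x -> is_minimizer f y -> (y c < x c)%R ->
  exists2 k, (forall b, k = Some b -> (x b < y b)%R) &
    f (exch x (Some c) k) < f x \/
    f (exch x (Some c) k) = f x /\ is_minimizer f (exch y k (Some c)).
Proof.
move=> hx hy yc; have [k [hk ex]] := ssqm hx (minimizer_dom hx hy) yc.
exists k; first by case: k hk {ex} => // b hb _ [<-].
case: ex => [lt | lt | [ex ey]]; [by left | by move: lt; rewrite ltNge hy | right].
by split=> // z; rewrite ey; apply: hy.
Qed.

Lemma nearest_exch_not_min x y k l : nearest f x y -> k <> l ->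
  (forall b, k = Some b -> (x b < y b)%R) -> (forall a, l = Some a -> (y a < x a)%R) ->
  ~ is_minimizer f (exch y k l).
Proof.
move=> [_ hnear] kl hk hl /hnear; rewrite dist_exchr leqNgt.
by rewrite (dist_exch_lt (nesym kl) hl hk).
Qed.

Lemma nearest_stop x y : in_dom f x -> bsd_stop f x -> nearest f x y -> x = y.
Proof.
move=> hx hstop hnear; have hy := hnear.1.
apply: functional_extensionality => t; case: (ltgtP (x t) (y t)) => // ht; exfalso.
- have [k hk [lt | [_ hmin]]] := minimizer_exch_down hx hy ht.
    by move: lt; rewrite ltNge hstop.
  apply: (nearest_exch_not_min hnear _ _ hk hmin) => [tk | _ [<-] //].
  by have := hk t (esym tk); rewrite ltNge (ltW ht).
- have [k hk [lt | [_ hmin]]] := minimizer_exch_up hx hy ht.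
    by move: lt; rewrite ltNge hstop.
  apply: (nearest_exch_not_min hnear _ hk _ hmin) => [kt | _ [<-] //].
  by have := hk t kt; rewrite ltNge (ltW ht).
Qed.

Section SteepestStep.
Variables (x : zvec n) (i j : option 'I_n).
Hypotheses (hx : in_dom f x) (hdesc : f (exch x i j) < f x) (hsteep : steepest f x i j).

Lemma descent_neq : i <> j.
Proof. by move=> ij; move: hdesc; rewrite ij exch_id ltxx. Qed.

Lemma descent_dom : in_dom f (exch x i j).
Proof. exact: lt_trans hdesc hx. Qed.

Lemma steepest_exch_down y a : is_minimizer f y -> i = Some a -> (x a <= y a)%R ->
  exists k, [/\ k <> j, forall b, k = Some b -> (y b < x b)%R,
    is_minimizer f (exch y (Some a) k) & f (exch x k j) = f (exch x i j)].
Proof.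
move=> hy ei xa; have ja : j <> Some a by move=> ja; apply: descent_neq; rewrite ei ja.
have x'a : (exch x i j a < y a)%R by rewrite ei exch_out //; lia.
have [k hk [lt | [eq hmin]]] := minimizer_exch_down descent_dom hy x'a.
  by move: lt; rewrite [in X in X < _]ei exch_exchl ltNge hsteep.
rewrite [in X in X = _]ei exch_exchl in eq.
have kj : k <> j by move=> kj; move: hdesc; rewrite -eq kj exch_id ltxx.
exists k; split=> // b kb; have := hk b kb.
have ib : i <> Some b.
  by move=> ib; move: ei (hk b kb) x'a; rewrite ib => -[->]; lia.
by rewrite exch_other // -kb; apply: nesym.
Qed.

Lemma steepest_exch_up y c : is_minimizer f y -> j = Some c -> (y c <= x c)%R ->
  exists k, [/\ k <> i, forall b, k = Some b -> (x b < y b)%R,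
    is_minimizer f (exch y k (Some c)) & f (exch x i k) = f (exch x i j)].
Proof.
move=> hy ej yc; have ic : i <> Some c by move=> ic; apply: descent_neq; rewrite ej ic.
have x'c : (y c < exch x i j c)%R by rewrite ej exch_in //; lia.
have [k hk [lt | [eq hmin]]] := minimizer_exch_up descent_dom hy x'c.
  by move: lt; rewrite [in X in X < _]ej exch_exchr ltNge hsteep.
rewrite [in X in X = _]ej exch_exchr in eq.
have ki : k <> i by move=> ki; move: hdesc; rewrite -eq ki exch_id ltxx.
exists k; split=> // b kb; have := hk b kb.
have jb : j <> Some b.
  by move=> jb; move: ej (hk b kb) x'c; rewrite jb => -[->]; lia.
by rewrite exch_other // -kb; apply: nesym.
Qed.

Lemma nearer_minimizer_out y a : is_minimizer f y -> i = Some a -> (x a <= y a)%R ->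
  (forall c, j = Some c -> (x c < y c)%R) ->
  exists2 z, is_minimizer f z & (dist (exch x i j) z < dist x y)%N.
Proof.
move=> hy ei xa hj; have [k [kj hk hmin _]] := steepest_exch_down hy ei xa.
exists (exch y (Some a) k) => //.
by rewrite dist_exchr ei exch_exchl; apply: dist_exch_lt.
Qed.

Lemma nearer_minimizer_in y c : is_minimizer f y -> j = Some c -> (y c <= x c)%R ->
  (forall a, i = Some a -> (y a < x a)%R) ->
  exists2 z, is_minimizer f z & (dist (exch x i j) z < dist x y)%N.
Proof.
move=> hy ej yc hi; have [k [ki hk hmin _]] := steepest_exch_up hy ej yc.
exists (exch y k (Some c)) => //.
by rewrite dist_exchr ej exch_exchr; apply: dist_exch_lt (nesym ki) hi hk.
Qed.

End SteepestStep.

(* Nearness of y forces y a = x a and y c = x c; an exchange then turns y into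
   an equally near minimizer for which one of the two previous cases applies. *)
Lemma nearer_minimizer_both x y a c :
  in_dom f x -> f (exch x (Some a) (Some c)) < f x -> steepest f x (Some a) (Some c) ->
  nearest f x y -> (x a <= y a)%R -> (y c <= x c)%R ->
  exists2 z, is_minimizer f z & (dist (exch x (Some a) (Some c)) z < dist x y)%N.
Proof.
move=> hx hdesc hsteep hnear xa yc; have hy := hnear.1.
have [k [kc hk hy1 hfk]] := steepest_exch_down hx hdesc hsteep hy erefl xa.
have ya : y a = x a.
  apply/eqP; rewrite eq_le xa andbT leNgt; apply/negP => lt.
  apply: (nearest_exch_not_min hnear _ _ hk hy1) => [ak | _ [<-] //].
  by have := hk a (esym ak); lia.
case: k kc hk hy1 hfk => [b|] kc hk hy1 hfk.
  have yb := hk b erefl.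
  have y1c : (exch y (Some a) (Some b) c <= x c)%R.
    by rewrite exch_other //; apply: descent_neq hdesc.
  have y1a : forall a', Some a = Some a' -> (exch y (Some a) (Some b) a' < x a')%R.
    by move=> _ [<-]; rewrite exch_out; [lia | move=> [ba]; move: yb; rewrite ba; lia].
  have [z hz lt] := nearer_minimizer_in hx hdesc hsteep hy1 erefl y1c y1a.
  exists z => //; apply: leq_trans lt _.
  by rewrite dist_exchr; apply: dist_exch_out_le.
have hdesc' : f (exch x None (Some c)) < f x by rewrite hfk.
have hsteep' : steepest f x None (Some c) by move=> i' j'; rewrite hfk.
have [k [ki {}hk hy2 _]] := steepest_exch_up hx hdesc' hsteep' hy erefl yc.
case: k ki hk hy2 => [b|] ki hk hy2; last by case: ki.
have xb := hk b erefl.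
have yc' : y c = x c.
  apply/eqP; rewrite eq_le yc /= leNgt; apply/negP => lt.
  apply: (nearest_exch_not_min hnear _ hk _ hy2) => [[bc] | _ [<-] //].
  by move: xb lt; rewrite bc; lia.
have y2a : (x a <= exch y (Some b) (Some c) a)%R.
  have ba : Some b <> Some a by move=> [ba]; move: xb; rewrite ba; lia.
  by rewrite exch_other ?ya //; apply/nesym/(descent_neq hdesc).
have y2c : forall c', Some c = Some c' -> (x c' < exch y (Some b) (Some c) c')%R.
  by move=> _ [<-]; rewrite exch_in; [lia | move=> [bc]; move: xb; rewrite bc; lia].
have [z hz lt] := nearer_minimizer_out hx hdesc hsteep hy2 erefl y2a y2c.
exists z => //; apply: leq_trans lt _.
by rewrite dist_exchr; apply: dist_exch_in_le.
Qed.

Lemma nearer_minimizer x y i j :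
  in_dom f x -> f (exch x i j) < f x -> steepest f x i j -> nearest f x y ->
  exists2 z, is_minimizer f z & (dist (exch x i j) z < dist x y)%N.
Proof.
move=> hx hdesc hsteep hnear; have hy := hnear.1.
have [hi | [a ei]] := some_dichotomy (fun a => y a < x a)%R i;
  have [hj | [c ej]] := some_dichotomy (fun c => x c < y c)%R j; rewrite -?leNgt.
- by exists y => //; apply: dist_exch_lt (descent_neq hdesc) hi hj.
- by move=> yc; exact: (nearer_minimizer_in hx hdesc hsteep hy ej yc hi).
- by move=> xa; exact: (nearer_minimizer_out hx hdesc hsteep hy ei xa hj).
- move=> yc xa; rewrite ei ej in hdesc hsteep *.
  exact: (nearer_minimizer_both hx hdesc hsteep hnear xa yc).
Qed.

Lemma exists_nearest x y : is_minimizer f y -> exists z, nearest f x z.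
Proof.
move=> hy; have [d] := ubnP (dist x y); elim: d y hy => // d IH y hy hd.
have [[z hz lt] | none] :=
  classic (exists2 z, is_minimizer f z & (dist x z < dist x y)%N).
  exact: IH hz (leq_trans lt hd).
exists y; split=> // z hz; rewrite leqNgt; apply/negP => lt.
by apply: none; exists z.
Qed.

Lemma bsd_step_steepest x x' : bsd_step f x x' ->
  exists i j, [/\ x' = exch x i j, f (exch x i j) < f x & steepest f x i j].
Proof.
move=> [nstop [i [j [-> hsteep]]]]; exists i, j; split=> //.
have [i' [j' lt]] : exists i' j', f (exch x i' j') < f x.
  apply: NNPP => none; apply: nstop => i' j'; rewrite leNgt; apply/negP => lt.
  by apply: none; exists i', j'.
exact: le_lt_trans (hsteep i' j') lt.
Qed.

Lemma bsd_step_lt x x' : bsd_step f x x' -> f x' < f x.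
Proof. by move=> /bsd_step_steepest [i [j [->]]]. Qed.

Lemma bsd_step_nearer x x' y : in_dom f x -> bsd_step f x x' -> nearest f x y ->
  exists2 z, nearest f x' z & (dist x' z < dist x y)%N.
Proof.
move=> hx /bsd_step_steepest [i [j [-> hdesc hsteep]]] hnear.
have [z hz lt] := nearer_minimizer hx hdesc hsteep hnear.
have [w hw] := exists_nearest (exch x i j) hz.
by exists w => //; apply: leq_ltn_trans (hw.2 z hz) lt.
Qed.

Lemma bsd_run_le x0 x : clos_refl_trans _ (bsd_step f) x0 x -> f x <= f x0.
Proof.
elim=> [a b /bsd_step_lt/ltW | a | a b c _ hab _ hbc] //.
exact: le_trans hbc hab.
Qed.

Lemma bsd_run_finite x0 : in_dom f x0 -> (exists y, is_minimizer f y) ->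
  ~ exists s : nat -> zvec n, s 0%N = x0 /\ forall m, bsd_step f (s m) (s m.+1).
Proof.
move=> hx0 [y0 hy0] [s [s0 hs]].
have [y hy] := exists_nearest x0 hy0.
have dom m : in_dom f (s m).
  elim: m => [|m IH]; first by rewrite s0.
  exact: lt_trans (bsd_step_lt (hs m)) IH.
suff: forall m, exists2 z, nearest f (s m) z & (dist (s m) z + m <= dist x0 y)%N.
  by move=> /(_ (dist x0 y).+1) [z _]; rewrite addnS ltnNge leq_addl.
elim=> [|m [z hz le]]; first by rewrite s0; exists y; rewrite ?addn0.
have [w hw lt] := bsd_step_nearer (dom m) (hs m) hz.
by exists w => //; rewrite addnS; apply: leq_trans le; rewrite ltn_add2r.
Qed.

Lemma bsd_stop_minimizer x0 x : in_dom f x0 -> (exists y, is_minimizer f y) ->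
  clos_refl_trans _ (bsd_step f) x0 x -> bsd_stop f x -> is_minimizer f x.
Proof.
move=> hx0 [y0 hy0] hrun hstop.
have hx : in_dom f x := le_lt_trans (bsd_run_le hrun) hx0.
have [y hy] := exists_nearest x hy0.
by rewrite (nearest_stop hx hstop hy); case: hy.
Qed.

End SteepestDescent.

Theorem corollary2p5 (R : realType) (n : nat) (f : zvec n -> \bar R)
  (f_noninf : forall x, f x != -oo)
  (hf : SSQMnat f)
  (hmin : exists x, is_minimizer f x)
  (x0 : zvec n) (hx0 : in_dom f x0) :
  (* every run from x0 halts after finitely many iterations ... *)
  (~ exists s : nat -> zvec n, s 0%N = x0 /\ forall k, bsd_step f (s k) (s k.+1)) /\
  (* ... and whatever it outputs is a minimizer of f *)
  (forall x, clos_refl_trans (zvec n) (bsd_step f) x0 x -> bsd_stop f x -> is_minimizer f x).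
Proof.
split; first exact: (bsd_run_finite hf hx0 hmin).
by move=> x; apply: (bsd_stop_minimizer hf hx0 hmin).
Qed.
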